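(* Let $r\ge3$, $n>r$, $c\ge1$, $\lambda\in\Lambda(n,r)$ (regarded as $n$-periodic) and $1\le i\le n$. In $T$: (i) If $\lambda_i=0$, there is a nonzero $z\in\mathbb{Z}[v,v^{-1}]$ such that $F_i^cE_i^c1_\lambda=z1_\lambda$ if $\lambda_{i+1}\ge c$, and $F_i^cE_i^c1_\lambda=0$ otherwise; moreover, if $c=\lambda_{i+1}=1$ then $z=1$. (ii) If $\lambda_{i+1}=0$, there is a nonzero $z'\in\mathbb{Z}[v,v^{-1}]$ such that $E_i^cF_i^c1_\lambda=z'1_\lambda$ if $\lambda_i\ge c$, and $E_i^cF_i^c1_\lambda=0$ otherwise; moreover, if $c=\lambda_i=1$ then $z'=1$.
   Context: $T$ is the $\mathbb{Q}(v)$-algebra with generators $E_i,F_i,K_i^{\pm1}$ ($1\le i\le n$, indices mod $n$) and relations: $K_iK_j=K_jK_i$; $K_iK_i^{-1}=K_i^{-1}K_i=1$; $K_iE_j=v^{\epsilon^+(i,j)}E_jK_i$; $K_iF_j=v^{-\epsilon^+(i,j)}F_jK_i$ ($\epsilon^+(i,j)=1$ if $j=i$, $-1$ if $j\equiv i-1\pmod n$, $0$ otherwise); $E_iF_j-F_jE_i=\delta_{ij}\frac{K_iK_{i+1}^{-1}-K_i^{-1}K_{i+1}}{v-v^{-1}}$; $E_iE_j=E_jE_i$, $F_iF_j=F_jF_i$ if $i-j\not\equiv\pm1$; $E_i^2E_j-(v+v^{-1})E_iE_jE_i+E_jE_i^2=0$, $F_i^2F_j-(v+v^{-1})F_iF_jF_i+F_jF_i^2=0$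 if $i-j\equiv\pm1\pmod n$; $K_1\cdots K_n=v^r$; $\prod_{j=0}^r(K_i-v^j)=0$. $\Lambda(n,r)$: compositions of $r$ into $n$ nonnegative parts, extended $n$-periodically. $1_\lambda=\prod_{i=1}^n\prod_{s=1}^{\lambda_i}\frac{K_iv^{-s+1}-K_i^{-1}v^{s-1}}{v^s-v^{-s}}$. *)

From HB Require Import structures.
From mathcomp Require Import all_boot all_order all_algebra fraction.
Set Implicit Arguments. Unset Strict Implicit. Unset Printing Implicit Defensive.
Import Order.TTheory GRing.Theory Num.Theory.
Local Open Scope ring_scope.

Definition Qv : fieldType := {fraction {poly rat}}.
Definition vq : Qv := tofrac ('X : {poly rat}).

(* z lies in Z[v,v^{-1}] (the Laurent polynomials with integer coefficients) *)
Definition in_Zvv (z : Qv) : Prop :=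
  exists (p : {poly int}) (k : nat),
    z = (map_poly (fun a : int => a%:~R : Qv) p).[vq] / vq ^+ k.

Definition epsp (n i j : nat) : int :=
  if j == i %[mod n] then 1%R
  else if j.+1 == i %[mod n] then (-1)%R else 0%R.

(* The defining relations of T, for generators indexed by nat, n-periodic.
   Kinv i plays the role of K_i^{-1}. *)
Definition T_rels (n r : nat) (A : algType Qv) (E F K Kinv : nat -> A) : Prop :=
  (forall i, E (i + n)%N = E i /\ F (i + n)%N = F i /\
                 K (i + n)%N = K i /\ Kinv (i + n)%N = Kinv i)  /\
      (forall i j, K i * K j = K j * K i)  /\
      (forall i, K i * Kinv i = 1 /\ Kinv i * K i = 1)  /\
      (forall i j, K i * E j = (vq ^ epsp n i j) *: (E j * K i))  /\
      (forall i j, K i * F j = (vq ^ (- epsp n i j)) *: (F j * K i))  /\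
      (forall i j, E i * F j - F j * E i =
         if i == j %[mod n] then
           (vq - vq^-1)^-1 *: (K i * Kinv i.+1 - Kinv i * K i.+1)
         else 0)  /\
      (forall i j, ~~ (i.+1 == j %[mod n]) -> ~~ (j.+1 == i %[mod n]) ->
         E i * E j = E j * E i /\ F i * F j = F j * F i)  /\
      (forall i j, (i.+1 == j %[mod n]) || (j.+1 == i %[mod n]) ->
         E i ^+ 2 * E j - (vq + vq^-1) *: (E i * E j * E i) + E j * E i ^+ 2 = 0 /\
         F i ^+ 2 * F j - (vq + vq^-1) *: (F i * F j * F i) + F j * F i ^+ 2 = 0) /\
      \prod_(1 <= i < n.+1) K i = (vq ^+ r)%:A /\
      (forall i, \prod_(0 <= j < r.+1) (K i - (vq ^+ j)%:A) = 0).

Definition one_lam (n : nat) (A : algType Qv) (K Kinv : nat -> A)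
    (lam : nat -> nat) : A :=
  \prod_(1 <= i < n.+1) \prod_(1 <= s < (lam i).+1)
     ((vq ^+ s - vq ^- s)^-1 *: (vq ^- s.-1 *: K i - vq ^+ s.-1 *: Kinv i)).

From HB Require Import structures.
From mathcomp Require Import all_boot all_order all_algebra fraction.
From mathcomp Require Import ring zify.
Import Order.TTheory GRing.Theory Num.Theory.
Set Implicit Arguments. Unset Strict Implicit. Unset Printing Implicit Defensive.
Local Open Scope ring_scope.

(* 1_lambda is a common eigenvector of the K_j, with eigenvalues v^(lambda_j).
   Indeed the factors of 1_lambda for the index j kill the eigenvalues v^t with
   t < lambda_j, and an eigenvalue v^t with t > lambda_j for some j would give
   the central element K_1 ... K_n = v^r an eigenvalue v^e with e > r.
   If lambda_i = 0, then F_i 1_lambda has K_i-eigenvalue v^-1, which is not a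
   root of prod_t (K_i - v^t), so F_i 1_lambda = 0 and the sl_2 commutation
   relation gives F_i^c E_i^c 1_lambda = prod_(k=1..c) [k][lambda_(i+1) + 1 - k]
   1_lambda.  Its factors are nonzero quantum integers for k <= lambda_(i+1), and
   the factor k = lambda_(i+1) + 1 is [0] = 0.  Part (ii) is the same computation
   with E_i, K_i and F_i, K_(i+1) exchanged. *)

Section QuantumIntegers.
Variables (F : fieldType) (q : F).
Hypothesis q_neq0 : q != 0.

Definition qint (m : nat) : F := \sum_(j < m) q ^+ (m.-1 - j) / q ^+ j.

(* The eigenvalue of (K_a^-1 K_b - K_a K_b^-1) / (q - q^-1) on a vector of
   weight (a, b); for (a, b) = (q^j, q^(L-j)) it is the quantum integer [L-2j]. *)
Definition qcomm_scalar (a b : F) : F := (b / a - a / b) / (q - q^-1).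

Lemma qint0 : qint 0 = 0.
Proof. exact: big_ord0. Qed.

Lemma qint1 : qint 1 = 1.
Proof. by rewrite /qint big_ord1 expr0 divr1. Qed.

Lemma qintS m : qint m.+1 = q * qint m + q ^- m.
Proof.
rewrite /qint big_ord_recr /= subnn expr0 div1r mulr_sumr; congr (_ + _).
by apply: eq_bigr => j _; rewrite mulrA -exprS; congr (_ ^+ _ / _); have := ltn_ord j; lia.
Qed.

Lemma qintE m : qint m * (q - q^-1) = q ^+ m - q ^- m.
Proof.
elim: m => [|m IH]; first by rewrite qint0 mul0r expr0 invr1 subrr.
rewrite qintS mulrDl -mulrA IH exprS.
by field; rewrite q_neq0 expf_neq0.
Qed.

Lemma sum_qcomm_scalar L k : q - q^-1 != 0 -> (k <= L.+1)%N ->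
  \sum_(j < k) qcomm_scalar (q ^+ j) (q ^+ L / q ^+ j) = qint k * qint (L.+1 - k).
Proof.
move=> qdelta_neq0; elim: k => [|k IH] le_kL; first by rewrite big_ord0 qint0 mul0r.
rewrite big_ord_recr /= IH; last exact: ltnW.
apply: (mulIf (expf_neq0 2 qdelta_neq0)).
rewrite expr2 mulrDl [qint k * _ * _]mulrACA [qint k.+1 * _ * _]mulrACA !qintE.
rewrite subSS; have -> : (L.+1 - k = (L - k).+1)%N by lia.
have -> : q ^+ L = q ^+ (L - k) * q ^+ k by rewrite -exprD subnK // -ltnS.
rewrite /qcomm_scalar !exprS.
have qq1 : q * q - 1 != 0 by rewrite -(mulfV q_neq0) -mulrBr mulf_neq0.
move: (expf_neq0 (L - k) q_neq0) (expf_neq0 k q_neq0).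
move: (q ^+ (L - k)) (q ^+ k) => u w u0 w0.
by field; rewrite u0 w0 q_neq0 qq1.
Qed.

End QuantumIntegers.

Lemma vq_neq0 : vq != 0.
Proof. by rewrite tofrac_eq0 polyX_eq0. Qed.

Lemma vqX_neq0 a : vq ^+ a != 0.
Proof. exact: expf_neq0 vq_neq0. Qed.

Lemma vqX_inj : injective (GRing.exp vq).
Proof.
move=> a b; rewrite /vq -!rmorphXn /= => /eqP; rewrite tofrac_eq => /eqP eq_ab.
by have := congr1 (fun p : {poly rat} => size p) eq_ab; rewrite !size_polyXn => -[].
Qed.

Lemma vqV_neqX t : vq^-1 != vq ^+ t.
Proof.
apply/eqP => eqV; suff /vqX_inj : vq ^+ t.+1 = vq ^+ 0 by [].
by rewrite exprS -eqV mulfV ?vq_neq0.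
Qed.

Lemma qdelta_neq0 : vq - vq^-1 != 0.
Proof.
rewrite subr_eq0; apply/eqP => eqV; suff /vqX_inj : vq ^+ 2 = vq ^+ 0 by [].
by rewrite expr2 {1}eqV mulVf ?vq_neq0.
Qed.

Lemma qint_vq_neq0 m : (0 < m)%N -> qint vq m != 0.
Proof.
move=> m_gt0; apply: contraTneq m_gt0 => qm0.
have /eqP : qint vq m * (vq - vq^-1) = 0 by rewrite qm0 mul0r.
rewrite (qintE vq_neq0) subr_eq0 => /eqP eqm.
suff /vqX_inj : vq ^+ (m + m) = vq ^+ 0 by lia.
by rewrite exprD {1}eqm mulVf ?vqX_neq0.
Qed.

Lemma in_Zvv_monomial a b : in_Zvv (vq ^+ a / vq ^+ b).
Proof. by exists 'X^a, b; rewrite map_polyXn hornerXn. Qed.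

Lemma in_Zvv1 : in_Zvv 1.
Proof. by have := in_Zvv_monomial 0 0; rewrite expr0 divr1. Qed.

Lemma in_Zvv0 : in_Zvv 0.
Proof. by exists 0, 0%N; rewrite rmorph0 horner0 mul0r. Qed.

Lemma in_Zvv_add x y : in_Zvv x -> in_Zvv y -> in_Zvv (x + y).
Proof.
move=> [p [k ->]] [q [l ->]]; exists (p * 'X^l + q * 'X^k), (k + l)%N.
rewrite rmorphD !rmorphM /= !map_polyXn hornerD !hornerM !hornerXn.
by rewrite addf_div ?vqX_neq0 // exprD.
Qed.

Lemma in_Zvv_mul x y : in_Zvv x -> in_Zvv y -> in_Zvv (x * y).
Proof.
move=> [p [k ->]] [q [l ->]]; exists (p * q), (k + l)%N.
by rewrite rmorphM /= hornerM exprD invfM mulrACA.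
Qed.

Lemma in_Zvv_qint m : in_Zvv (qint vq m).
Proof.
rewrite /qint.
by elim/big_ind: _ => [|x y|j _]; [exact: in_Zvv0|exact: in_Zvv_add|exact: in_Zvv_monomial].
Qed.

Definition lower_raise_coef (L c : nat) : Qv :=
  \prod_(1 <= k < c.+1) (qint vq k * qint vq (L.+1 - k)).

Lemma in_Zvv_lower_raise_coef L c : in_Zvv (lower_raise_coef L c).
Proof.
rewrite /lower_raise_coef.
elim/big_ind: _ => [|x y|k _]; [exact: in_Zvv1|exact: in_Zvv_mul|].
by apply: in_Zvv_mul; apply: in_Zvv_qint.
Qed.

Lemma lower_raise_coef_neq0 L c : (c <= L)%N -> lower_raise_coef L c != 0.
Proof.
move=> le_cL; rewrite prodf_seq_neq0; apply/allP => k; rewrite mem_index_iota => k_in /=.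
by rewrite mulf_neq0 // qint_vq_neq0 //; lia.
Qed.

Lemma lower_raise_coef_eq0 L c : (L < c)%N -> lower_raise_coef L c = 0.
Proof.
move=> lt_Lc; rewrite /lower_raise_coef (bigD1_seq L.+1) ?mem_index_iota ?iota_uniq //=.
by rewrite subnn qint0 mulr0 mul0r.
Qed.

Lemma lower_raise_coef11 : lower_raise_coef 1 1 = 1.
Proof. by rewrite /lower_raise_coef big_nat1 subSnn qint1 mulr1. Qed.

Lemma prod_sum_qcomm_scalar L c :
  \prod_(1 <= k < c.+1) \sum_(j < k) qcomm_scalar vq (vq ^+ j) (vq ^+ L / vq ^+ j) =
  lower_raise_coef L c.
Proof.
have sumE k : (k <= L.+1)%N -> \sum_(j < k) qcomm_scalar vq (vq ^+ j) (vq ^+ L / vq ^+ j) =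
    qint vq k * qint vq (L.+1 - k).
  exact: (sum_qcomm_scalar vq_neq0 qdelta_neq0).
have [le_cL | lt_Lc] := leqP c L.+1.
  by apply: eq_big_nat => k /andP [_ le_kc]; apply: sumE; apply: leq_trans le_cL.
have L1_in : L.+1 \in index_iota 1 c.+1 by rewrite mem_index_iota; lia.
rewrite lower_raise_coef_eq0 1?ltnW // (bigD1_seq _ L1_in (iota_uniq _ _)) /=.
by rewrite sumE // subnn qint0 mulr0 mul0r.
Qed.

Section ProdXsub.
Variables (R : fieldType) (A : algType R).

Definition prodXsub (a : A) (s : seq R) : A := \prod_(g <- s) (a - g%:A).

Lemma prodXsub_cons a g s : prodXsub a (g :: s) = (a - g%:A) * prodXsub a s.
Proof. exact: big_cons. Qed.

Lemma prodXsub_cat a s t : prodXsub a (s ++ t) = prodXsub a s * prodXsub a t.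
Proof. exact: big_cat. Qed.

Lemma comm_prodXsub a b s : GRing.comm b a -> GRing.comm b (prodXsub a s).
Proof.
by move=> cba; apply: commr_prod => g _; apply: commrB => //; apply/commr_sym/comm_alg.
Qed.

Lemma comm_XsubC (a : A) (g : R) : GRing.comm a (a - g%:A).
Proof. by apply: commrB => //; apply/commr_sym/comm_alg. Qed.

Lemma prodXsub_eigen a s x c : a * x = c *: x ->
  prodXsub a s * x = (\prod_(g <- s) (c - g)) *: x.
Proof.
move=> eig; elim: s => [|g s IH]; first by rewrite /prodXsub !big_nil mul1r scale1r.
rewrite prodXsub_cons big_cons -mulrA IH -scalerAr mulrBl mulr_algl eig -scalerBl.
by rewrite scalerA mulrC.
Qed.

Lemma eigen_prodXsub_eq0 a s x c :
  a * x = c *: x -> prodXsub a s * x = 0 -> c \notin s -> x = 0.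
Proof.
move=> eig /eqP; rewrite (prodXsub_eigen _ eig) scaler_eq0 => /orP[|/eqP-> //].
rewrite prodf_seq_eq0 => /hasP[g g_in /=]; rewrite subr_eq0 => /eqP->.
by rewrite g_in.
Qed.

Lemma prodXsub_mul_eigen a b g t w : GRing.comm a b -> a * w = g *: w ->
  prodXsub (a * b) [seq g * h | h <- t] * w = g ^+ size t *: (prodXsub b t * w).
Proof.
move=> cab eig; elim: t => [|h t IH]; first by rewrite /prodXsub !big_nil scale1r.
rewrite /= !prodXsub_cons -!mulrA IH -scalerAr.
set u := prodXsub b t * w.
have eig_u : a * u = g *: u.
  by rewrite /u mulrA (comm_prodXsub t cab) -mulrA eig scalerAr.
have -> : (a * b - (g * h)%:A) * u = g *: ((b - h%:A) * u).
  rewrite mulrBl cab -mulrA eig_u -scalerAr mulr_algl.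
  by rewrite [in RHS]mulrBl mulr_algl scalerBr scalerA.
by rewrite scalerA exprS mulrC.
Qed.

Lemma prodXsub_mul a b s t x : GRing.comm a b ->
  prodXsub a s * x = 0 -> prodXsub b t * x = 0 ->
  prodXsub (a * b) [seq g * h | g <- s, h <- t] * x = 0.
Proof.
move=> cab; elim: s x => [|g s IH] x; first by rewrite /prodXsub !big_nil !mul1r.
move=> ann_a ann_b; rewrite allpairs_cons /prodXsub big_cat /= -!/(prodXsub _ _).
set P := prodXsub (a * b) (allpairs _ s t).
have cbg : GRing.comm b (a - g%:A).
  by apply: commrB; [exact/commr_sym | exact/commr_sym/comm_alg].
have cabg : GRing.comm (a - g%:A) (a * b).
  by apply: commrM; apply/commr_sym; [exact: comm_XsubC | exact: cbg].
have ann_ag : P * ((a - g%:A) * x) = 0.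
  apply: IH; rewrite mulrA.
    by rewrite -(comm_prodXsub s (commr_sym (comm_XsubC a g))) -prodXsub_cons.
  by rewrite -(comm_prodXsub t (commr_sym cbg)) -mulrA ann_b mulr0.
have eig : a * (P * x) = g *: (P * x).
  apply/eqP; rewrite -subr_eq0 -mulr_algl -mulrBl mulrA.
  by rewrite (comm_prodXsub _ cabg) -mulrA ann_ag.
have ann_b' : prodXsub b t * (P * x) = 0.
  have cbab : GRing.comm b (a * b) by apply: commrM => //; apply/commr_sym.
  have cPb : GRing.comm (prodXsub b t) P.
    by apply/commr_sym/comm_prodXsub/commr_sym/comm_prodXsub.
  by rewrite mulrA cPb -mulrA ann_b mulr0.
by rewrite -mulrA prodXsub_mul_eigen // ann_b' scaler0.
Qed.

End ProdXsub.

Section SpectralBound.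
Variable A : algType Qv.

Definition spec_ge (a : A) (m : nat) (y : A) : Prop :=
  exists2 es : seq nat, all (leq m) es & prodXsub a [seq vq ^+ e | e <- es] * y = 0.

Lemma spec_ge_iota a m l y :
  prodXsub a [seq vq ^+ t | t <- iota m l] * y = 0 -> spec_ge a m y.
Proof. by exists (iota m l) => //; apply/allP => t; rewrite mem_iota => /andP[]. Qed.

Lemma spec_geM a b m1 m2 y : GRing.comm a b ->
  spec_ge a m1 y -> spec_ge b m2 y -> spec_ge (a * b) (m1 + m2) y.
Proof.
move=> cab [es1 ge1 ann1] [es2 ge2 ann2].
exists [seq e1 + e2 | e1 <- es1, e2 <- es2]%N.
  apply/allP => _ /allpairsP[[e1 e2] [/= e1_in e2_in ->]].
  by rewrite leq_add // ?(allP ge1) ?(allP ge2).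
rewrite map_allpairs -(prodXsub_mul cab ann1 ann2) allpairs_mapl allpairs_mapr.
by congr (prodXsub _ _ * _); apply: eq_allpairs => e1 e2; rewrite exprD.
Qed.

Lemma spec_ge_prod (K : nat -> A) (mu : nat -> nat) n y :
  (forall j k, GRing.comm (K j) (K k)) ->
  (forall k, (1 <= k <= n)%N -> spec_ge (K k) (mu k) y) ->
  spec_ge (\prod_(1 <= k < n.+1) K k) (\sum_(1 <= k < n.+1) mu k) y.
Proof.
move=> cK; elim: n => [_|n IH spec_K].
  rewrite !big_geq //; exists [:: 0%N] => //.
  by rewrite /prodXsub big_seq1 expr0 scale1r subrr mul0r.
rewrite !(big_nat_recr n.+1) //=; apply: spec_geM; last by apply: spec_K; rewrite /= leqnn.
  by apply/commr_sym/commr_prod.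
by apply: IH => k /andP[k_ge1 k_le]; apply: spec_K; rewrite k_ge1 ltnW.
Qed.

Lemma spec_ge_scalar_eq0 r m y : spec_ge ((vq ^+ r)%:A) m y -> (r < m)%N -> y = 0.
Proof.
move=> [es ge_m ann] lt_rm; apply: (eigen_prodXsub_eq0 (mulr_algl _ _) ann).
apply/mapP => -[e e_in /vqX_inj r_eq]; move/allP/(_ e e_in): ge_m.
by rewrite -r_eq leqNgt lt_rm.
Qed.

End SpectralBound.

Section OneLambda.
Variables (A : algType Qv) (K Kinv : nat -> A).
Hypothesis KK : forall a b, K a * K b = K b * K a.
Hypothesis KKinv : forall a, K a * Kinv a = 1 /\ Kinv a * K a = 1.
Variables (n r : nat) (lam : nat -> nat).
Hypothesis K_ann : forall j, \prod_(0 <= t < r.+1) (K j - (vq ^+ t)%:A) = 0.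
Hypothesis prodK : \prod_(1 <= j < n.+1) K j = (vq ^+ r)%:A.
Hypothesis lam_sum : (\sum_(1 <= k < n.+1) lam k)%N = r.

Lemma comm_K_Kinv j k : GRing.comm (K j) (Kinv k).
Proof.
rewrite /GRing.comm -[LHS]mul1r -(KKinv k).2 -mulrA (mulrA (K k)) KK.
by rewrite -!mulrA (KKinv k).1 mulr1.
Qed.

Definition lam_factor j s : A :=
  (vq ^+ s - vq ^- s)^-1 *: (vq ^- s.-1 *: K j - vq ^+ s.-1 *: Kinv j).

Lemma comm_K_lam_factor k j s : GRing.comm (K k) (lam_factor j s).
Proof.
have commZ c (x y : A) : GRing.comm x y -> GRing.comm x (c *: y).
  by move=> cxy; rewrite /GRing.comm -scalerAr cxy scalerAl.
by apply/commZ/commrB; apply/commZ; [exact: KK | exact: comm_K_Kinv].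
Qed.

Lemma lam_factorS j s :
  exists2 g, GRing.comm (K j) g & lam_factor j s.+1 = (K j - (vq ^+ s)%:A) * g.
Proof.
set a := vq ^+ s; set c := (vq ^+ s.+1 - vq ^- s.+1)^-1.
exists ((c / a) *: ((K j + a%:A) * Kinv j)).
  apply/commr_sym; rewrite /GRing.comm -!scalerAl -!scalerAr; congr (_ *: _).
  by rewrite -mulrA -(comm_K_Kinv j j) !mulrA mulrDl mulrDr mulr_algl mulr_algr.
rewrite -scalerAr mulrA.
have -> : (K j - a%:A) * (K j + a%:A) = K j * K j - (a * a)%:A.
  rewrite mulrDr !mulrBl mulr_algl mulr_algr -[(a * a)%:A]scalerA mulr_algl.
  by rewrite addrA subrK.
rewrite mulrBl -mulrA (KKinv j).1 mulr1 mulr_algl scalerBr !scalerA /lam_factor /=.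
rewrite -/c -/a scalerBr !scalerA; congr (_ *: _ - _ *: _).
by rewrite mulrA -(mulrA c) mulVf ?vqX_neq0 // mulr1.
Qed.

Lemma prod_lam_factor j m : exists2 g, GRing.comm (K j) g &
  \prod_(1 <= s < m.+1) lam_factor j s = prodXsub (K j) [seq vq ^+ t | t <- iota 0 m] * g.
Proof.
elim: m => [|m [g cg IH]].
  by exists 1; [exact: commr1 | rewrite big_geq // mulr1 /prodXsub big_nil].
have [g' cg' factorE] := lam_factorS j m.
exists (g * g'); first exact: commrM.
have -> : iota 0 m.+1 = iota 0 m ++ [:: m] by rewrite -addn1 iotaD.
rewrite big_nat_recr //= IH factorE map_cat prodXsub_cat [prodXsub _ [:: _]]big_seq1.
rewrite -!mulrA; congr (_ * _); rewrite !mulrA; congr (_ * _).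
by apply: commrB; [exact/commr_sym | exact/commr_sym/comm_alg].
Qed.

Lemma prod_lam_factor_ann j m : (m <= r)%N ->
  prodXsub (K j) [seq vq ^+ t | t <- iota m (r.+1 - m)] * \prod_(1 <= s < m.+1) lam_factor j s = 0.
Proof.
move=> le_mr; have [g _ ->] := prod_lam_factor j m.
have cP s t : GRing.comm (prodXsub (K j) s) (prodXsub (K j) t).
  exact/comm_prodXsub/commr_sym/comm_prodXsub/commr_refl.
rewrite mulrA cP -prodXsub_cat -map_cat.
rewrite -[iota m _]/(iota (0 + m) _) -iotaD subnKC; last exact: leqW.
by rewrite /prodXsub big_map K_ann mul0r.
Qed.

Lemma one_lamE : one_lam n K Kinv lam =
  \prod_(1 <= i < n.+1) \prod_(1 <= s < (lam i).+1) lam_factor i s.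
Proof. by []. Qed.

Lemma lam_le_r k : (1 <= k <= n)%N -> (lam k <= r)%N.
Proof.
move=> k_in; rewrite -lam_sum (bigD1_seq k) ?mem_index_iota ?iota_uniq //=.
exact: leq_addr.
Qed.

Lemma one_lam_ann k : (1 <= k <= n)%N ->
  prodXsub (K k) [seq vq ^+ t | t <- iota (lam k) (r.+1 - lam k)] * one_lam n K Kinv lam = 0.
Proof.
move=> /andP[k_ge1 k_le]; rewrite one_lamE.
have k_lt : (k < n.+1)%N by rewrite ltnS.
rewrite (big_cat_nat (n := k) k_ge1 (ltnW k_lt)) (big_ltn k_lt) /=.
set L := \prod_(1 <= i < k) _.
have cLK : GRing.comm L (K k).
  by apply/commr_sym/commr_prod => i _; apply/commr_prod => s _; apply: comm_K_lam_factor.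
rewrite mulrA -(comm_prodXsub _ cLK) -!mulrA (mulrA (prodXsub _ _)).
by rewrite prod_lam_factor_ann ?mul0r ?mulr0 // lam_le_r // k_ge1.
Qed.

Lemma one_lam_weight j : (1 <= j <= n)%N ->
  K j * one_lam n K Kinv lam = vq ^+ lam j *: one_lam n K Kinv lam.
Proof.
move=> j_in; set x := one_lam n K Kinv lam; set y := (K j - (vq ^+ lam j)%:A) * x.
suff : y = 0 by move/eqP; rewrite /y mulrBl mulr_algl subr_eq0 => /eqP.
pose mu k := (lam k + (k == j))%N.
have sum_mu : (\sum_(1 <= k < n.+1) mu k)%N = r.+1.
  rewrite big_split /= lam_sum (bigD1_seq j) ?mem_index_iota ?iota_uniq //= eqxx.
  by rewrite big1 ?addn0 ?addn1 // => k /negbTE ->.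
apply: (@spec_ge_scalar_eq0 _ r r.+1) => //; rewrite -prodK -sum_mu.
apply: spec_ge_prod => [a b|k k_in]; first exact: KK.
have cy a s : GRing.comm (K j - (vq ^+ lam j)%:A) (prodXsub (K a) s).
  by apply/comm_prodXsub/commr_sym/commrB; [exact: KK | exact/commr_sym/comm_alg].
rewrite /mu; case: eqP => [->|_]; last first.
  apply: (@spec_ge_iota _ _ _ (r.+1 - lam k)).
  by rewrite addn0 /y mulrA -cy -mulrA one_lam_ann ?mulr0.
apply: (@spec_ge_iota _ _ _ (r.+1 - (lam j).+1)); rewrite addn1 /y mulrA -cy.
rewrite -prodXsub_cons; apply: etrans (one_lam_ann j_in).
by rewrite subSS subSn ?lam_le_r.
Qed.

End OneLambda.

Lemma eigen_inv (A : algType Qv) (k kI u : A) a :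
  kI * k = 1 -> a != 0 -> k * u = a *: u -> kI * u = a^-1 *: u.
Proof.
move=> kIk a0 eig; rewrite -[in LHS](scale1r u) -(mulVf a0) -scalerA -eig.
by rewrite -scalerAr mulrA kIk mul1r.
Qed.

Section LowerRaise.
Variables (A : algType Qv) (X Y Ka Kb KaI KbI : A).

Definition weight (u : A) (a b : Qv) := Ka * u = a *: u /\ Kb * u = b *: u.

Lemma lower_raise_step u (s : nat -> Qv) k : Y * u = 0 ->
  (forall j, (Y * X - X * Y) * (X ^+ j * u) = s j *: (X ^+ j * u)) ->
  Y * (X ^+ k.+1 * u) = (\sum_(j < k.+1) s j) *: (X ^+ k * u).
Proof.
move=> Yu comm_s; have YXE w : Y * (X * w) = (Y * X - X * Y) * w + X * (Y * w).
  by rewrite mulrBl !mulrA subrK.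
elim: k => [|k IH].
  by have := comm_s 0%N; rewrite big_ord1 expr1 !expr0 !mul1r YXE Yu mulr0 addr0.
rewrite exprS -mulrA YXE comm_s IH -scalerAr mulrA -exprS -scalerDl.
by rewrite [in RHS]big_ord_recr addrC.
Qed.

Lemma lower_raise_chain u (s : nat -> Qv) c : Y * u = 0 ->
  (forall j, (Y * X - X * Y) * (X ^+ j * u) = s j *: (X ^+ j * u)) ->
  Y ^+ c * (X ^+ c * u) = (\prod_(1 <= k < c.+1) \sum_(j < k) s j) *: u.
Proof.
move=> Yu comm_s; elim: c => [|c IH]; first by rewrite !expr0 !mul1r big_geq // scale1r.
rewrite exprSr -mulrA (lower_raise_step _ Yu comm_s) -scalerAr IH scalerA.
by rewrite [in RHS]big_nat_recr //= mulrC.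
Qed.

Hypotheses (KaX : Ka * X = vq *: (X * Ka)) (KbX : Kb * X = vq^-1 *: (X * Kb)).
Hypothesis KaY : Ka * Y = vq^-1 *: (Y * Ka).
Hypotheses (KaIKa : KaI * Ka = 1) (KbIKb : KbI * Kb = 1).
Hypothesis YX : Y * X - X * Y = (vq - vq^-1)^-1 *: (KaI * Kb - Ka * KbI).

Lemma weightX u a b k : weight u a b -> weight (X ^+ k * u) (a * vq ^+ k) (b / vq ^+ k).
Proof.
move=> [Kau Kbu]; elim: k => [|k [IHa IHb]]; first by rewrite !expr0 mul1r mulr1 divr1.
rewrite exprS -mulrA; split; rewrite mulrA ?KaX ?KbX -scalerAl -mulrA ?IHa ?IHb.
  by rewrite -scalerAr scalerA mulrCA exprS.
by rewrite -scalerAr scalerA mulrCA exprS invfM.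
Qed.

Lemma commutator_weight u a b : a != 0 -> b != 0 -> weight u a b ->
  (Y * X - X * Y) * u = qcomm_scalar vq a b *: u.
Proof.
move=> a0 b0 [Kau Kbu].
rewrite YX -scalerAl mulrBl -!mulrA Kbu (eigen_inv KbIKb b0 Kbu) -!scalerAr.
rewrite (eigen_inv KaIKa a0 Kau) Kau !scalerA -scalerBl scalerA /qcomm_scalar.
by rewrite mulrC [b^-1 * _]mulrC [b * _]mulrC.
Qed.

Lemma lower_raise_pow r u L c :
  \prod_(0 <= t < r.+1) (Ka - (vq ^+ t)%:A) = 0 -> weight u 1 (vq ^+ L) ->
  Y ^+ c * (X ^+ c * u) = lower_raise_coef L c *: u.
Proof.
move=> Ka_ann wu; rewrite -prod_sum_qcomm_scalar.
apply: (lower_raise_chain (s := fun j => qcomm_scalar vq (vq ^+ j) (vq ^+ L / vq ^+ j))).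
  have KaYu : Ka * (Y * u) = vq^-1 *: (Y * u).
    by rewrite mulrA KaY -scalerAl -mulrA wu.1 scale1r.
  apply: (eigen_prodXsub_eq0 KaYu (s := [seq vq ^+ t | t <- iota 0 r.+1])).
    by rewrite /prodXsub big_map Ka_ann mul0r.
  by apply/mapP => -[t _]; apply/eqP; exact: vqV_neqX.
move=> j; have := commutator_weight _ _ (weightX j wu); rewrite mul1r; apply.
  exact: vqX_neq0.
by rewrite mulf_neq0 ?invr_neq0 ?vqX_neq0.
Qed.

End LowerRaise.

Lemma lower_raise_witness L c : exists z, [/\ in_Zvv z, z != 0,
  (c <= L)%N -> z = lower_raise_coef L c & (c = 1%N -> L = 1%N -> z = 1)].
Proof.
have [le_cL | lt_Lc] := leqP c L.
  exists (lower_raise_coef L c); split.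
  - exact: in_Zvv_lower_raise_coef.
  - exact: lower_raise_coef_neq0.
  - by [].
  - by move=> -> ->; exact: lower_raise_coef11.
exists 1; split; [exact: in_Zvv1 | exact: oner_neq0 | by [] | ].
by move=> c1 L1; move: lt_Lc; rewrite c1 L1.
Qed.

Lemma epsp_ii n i : epsp n i i = 1.
Proof. by rewrite /epsp eqxx. Qed.

Lemma epsp_Si n i : (1 < n)%N -> epsp n i.+1 i = -1.
Proof.
move=> n_gt1; rewrite /epsp eqxx eq_sym eqn_mod_dvd // subSnn dvdn1.
by rewrite gtn_eqF.
Qed.

Section TAlgebra.
Variables (n r : nat) (lam : nat -> nat) (A : algType Qv) (E F K Kinv : nat -> A) (i : nat).
Hypotheses (n_gt1 : (1 < n)%N) (i_in : (1 <= i <= n)%N).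
Hypothesis lam_periodic : forall k, lam (k + n)%N = lam k.
Hypothesis lam_sum : (\sum_(1 <= k < n.+1) lam k)%N = r.
Hypothesis rels : T_rels n r E F K Kinv.

Lemma T_one_lam_weight :
  weight (K i) (K i.+1) (one_lam n K Kinv lam) (vq ^+ lam i) (vq ^+ lam i.+1).
Proof.
have [K_per [KK [KKinv [_ [_ [_ [_ [_ [prodK K_ann]]]]]]]]] := rels.
have wt := one_lam_weight KK KKinv K_ann prodK lam_sum.
split; first exact: wt.
have [lt_in | ge_in] := ltnP i n; first by apply: wt; lia.
have -> : i.+1 = (1 + n)%N by lia.
by case: (K_per 1%N) => _ [_ [-> _]]; rewrite lam_periodic; apply: wt; rewrite /= ltnW.
Qed.

Lemma T_FE_one_lam c : lam i = 0%N ->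
  F i ^+ c * E i ^+ c * one_lam n K Kinv lam =
    lower_raise_coef (lam i.+1) c *: one_lam n K Kinv lam.
Proof.
have [_ [_ [KKinv [KE [KF [EF [_ [_ [_ K_ann]]]]]]]]] := rels.
move=> lam_i0; have := T_one_lam_weight; rewrite lam_i0 expr0 => wt.
have KaX : K i * E i = vq *: (E i * K i) by rewrite KE epsp_ii expr1z.
have KbX : K i.+1 * E i = vq^-1 *: (E i * K i.+1) by rewrite KE epsp_Si // exprN1.
have KaY : K i * F i = vq^-1 *: (F i * K i) by rewrite KF epsp_ii exprN1.
have YX : F i * E i - E i * F i =
    (vq - vq^-1)^-1 *: (Kinv i * K i.+1 - K i * Kinv i.+1).
  by rewrite -opprB EF eqxx -scalerN opprB.
rewrite -mulrA.
exact: (lower_raise_pow KaX KbX KaY (KKinv i).2 (KKinv i.+1).2 YX c (K_ann i) wt).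
Qed.

Lemma T_EF_one_lam c : lam i.+1 = 0%N ->
  E i ^+ c * F i ^+ c * one_lam n K Kinv lam =
    lower_raise_coef (lam i) c *: one_lam n K Kinv lam.
Proof.
have [_ [KK [KKinv [KE [KF [EF [_ [_ [_ K_ann]]]]]]]]] := rels.
move=> lam_i10; have [wt_i wt_i1] := T_one_lam_weight.
have wt : weight (K i.+1) (K i) (one_lam n K Kinv lam) 1 (vq ^+ lam i).
  by split; rewrite ?wt_i1 ?lam_i10 ?expr0.
have KaX : K i.+1 * F i = vq *: (F i * K i.+1) by rewrite KF epsp_Si // opprK expr1z.
have KbX : K i * F i = vq^-1 *: (F i * K i) by rewrite KF epsp_ii exprN1.
have KaY : K i.+1 * E i = vq^-1 *: (E i * K i.+1) by rewrite KE epsp_Si // exprN1.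
have YX : E i * F i - F i * E i =
    (vq - vq^-1)^-1 *: (Kinv i.+1 * K i - K i.+1 * Kinv i).
  by rewrite EF eqxx -(comm_K_Kinv KK KKinv i i.+1) (comm_K_Kinv KK KKinv i.+1 i).
rewrite -mulrA.
exact: (lower_raise_pow KaX KbX KaY (KKinv i.+1).2 (KKinv i).2 YX c (K_ann i.+1) wt).
Qed.

End TAlgebra.

Theorem lemma2p2p7 (r n c : nat) (lam : nat -> nat) (i : nat) :
  (3 <= r)%N -> (r < n)%N -> (1 <= c)%N ->
  (forall k, lam (k + n)%N = lam k) ->
  (\sum_(1 <= k < n.+1) lam k)%N = r ->
  (1 <= i <= n)%N ->
  (lam i = 0%N ->
    exists z : Qv, [/\ in_Zvv z, z != 0,
      (forall (A : algType Qv) (E F K Kinv : nat -> A),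
         T_rels n r E F K Kinv ->
         if (c <= lam i.+1)%N
         then F i ^+ c * E i ^+ c * one_lam n K Kinv lam = z *: one_lam n K Kinv lam
         else F i ^+ c * E i ^+ c * one_lam n K Kinv lam = 0) &
      (c = 1%N -> lam i.+1 = 1%N -> z = 1)])
  /\
  (lam i.+1 = 0%N ->
    exists z' : Qv, [/\ in_Zvv z', z' != 0,
      (forall (A : algType Qv) (E F K Kinv : nat -> A),
         T_rels n r E F K Kinv ->
         if (c <= lam i)%N
         then E i ^+ c * F i ^+ c * one_lam n K Kinv lam = z' *: one_lam n K Kinv lam
         else E i ^+ c * F i ^+ c * one_lam n K Kinv lam = 0) &
      (c = 1%N -> lam i = 1%N -> z' = 1)]).
Proof.
move=> r_ge3 lt_rn _ lam_periodic lam_sum i_in.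
have n_gt1 : (1 < n)%N by lia.
split=> lam0.
  have [z [Zz z0 zE z11]] := lower_raise_witness (lam i.+1) c.
  exists z; split=> // A E F K Kinv rels.
  rewrite (T_FE_one_lam n_gt1 i_in lam_periodic lam_sum rels c lam0).
  by case: leqP => [/zE -> | /lower_raise_coef_eq0 ->]; rewrite ?scale0r.
have [z [Zz z0 zE z11]] := lower_raise_witness (lam i) c.
exists z; split=> // A E F K Kinv rels.
rewrite (T_EF_one_lam n_gt1 i_in lam_periodic lam_sum rels c lam0).
by case: leqP => [/zE -> | /lower_raise_coef_eq0 ->]; rewrite ?scale0r.
Qed.
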